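(* Every separable, incomplete real normed space $X$ contains a bounded overcomplete sequence that is not relatively (norm) compact in $X$.
   Context: A sequence $(g_k)_{k<\omega}$ in a normed space $X$ is overcomplete if every subsequence of it is linearly dense in $X$, i.e. the closed linear span of every subsequence is $X$. *)

From HB Require Import structures.
From mathcomp Require Import all_boot all_order all_algebra.
From mathcomp Require Import all_classical all_reals all_analysis.
From mathcomp Require Import Rstruct Rstruct_topology.
Set Implicit Arguments. Unset Strict Implicit. Unset Printing Implicit Defensive.
Import Order.TTheory GRing.Theory Num.Theory.
Import numFieldNormedType.Exports.
Local Open Scope classical_set_scope.
Local Open Scope ring_scope.

Definition separable_space {K : numDomainType} (X : normedModType K) : Prop :=
  exists D : set X, countable D /\ dense D.

Definition incomplete_space {K : numDomainType} (X : normedModType K) : Prop :=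
  exists u : nat -> X, cauchy (u @ \oo) /\ ~ cvg (u @ \oo).

Definition lin_span {K : numDomainType} {X : normedModType K} (S : set X) : set X :=
  [set x | exists (n : nat) (c : 'I_n -> K) (v : 'I_n -> X),
      (forall i, S (v i)) /\ x = \sum_(i < n) c i *: v i].

Definition linearly_dense {K : numDomainType} {X : normedModType K} (S : set X) : Prop :=
  closure (lin_span S) = [set: X].

Definition overcomplete {K : numDomainType} {X : normedModType K} (g : nat -> X) : Prop :=
  forall phi : nat -> nat, (forall n, (phi n < phi n.+1)%N) ->
    linearly_dense (range (g \o phi)).

Definition bounded_seq {K : numDomainType} {X : normedModType K} (g : nat -> X) : Prop :=
  exists M : K, forall n, `|g n| <= M.

Definition relatively_compact {T : topologicalType} (A : set T) : Prop :=
  compact (closure A).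

From Stdlib Require Import Reals.
From HB Require Import structures.
From mathcomp Require Import all_boot all_order all_algebra.
From mathcomp Require Import all_classical all_reals all_analysis.
From mathcomp Require Import Rstruct Rstruct_topology.
From mathcomp Require Import lra.
Set Implicit Arguments. Unset Strict Implicit. Unset Printing Implicit Defensive.
Import Order.TTheory GRing.Theory Num.Theory.
Import numFieldNormedType.Exports.
Local Open Scope classical_set_scope.
Local Open Scope ring_scope.

(* Choose a Cauchy sequence (a_n) without limit, thinned out so that
   |a_p - a_q| <= s_p^p for p <= q, where s_n = 1/(n+2), and a dense sequence
   (e_k) rescaled into the unit ball, and put
   g_n = a_n + sum_(k < n) s_n^(k+1) e_k.
   Since g_n - a_n -> 0, the sequence g is Cauchy; if its range had compact
   closure, g would converge, and then so would a.
   Given a subsequence of g, every e_L lies in its closed span Y, by strong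
   induction on L: for p <= q far out in the subsequence, the vector
   s_p^-(L+1) (g_p - g_q - sum_(k < L) s_p^(k+1) e_k) is in Y and lies within
   3 s_p + 2 s_q / s_p^(L+1) of e_L, which is small once p is large and q is
   then taken large with respect to p. *)

Lemma dense_closureT (T : topologicalType) (A : set T) :
  dense A -> closure A = [set: T].
Proof.
move=> dA; apply/seteqP; split=> // x _ B; rewrite nbhsE; case=> O [oO Ox] OB.
have [y [Oy Ay]] := dA O (ex_intro _ x Ox) oO.
by exists y; split=> //; apply: OB.
Qed.

Section RealNormedSpace.
Variables (K : realType) (X : normedModType K).

Lemma separable_dense_seq :
  separable_space X -> exists d : nat -> X, dense (range d).
Proof.
move=> [D [/pcard_surjP [d dsurj] dD]]; exists d => O O0 oO.
have [x [Ox Dx]] := dD O O0 oO; have [n _ dnx] := dsurj x Dx.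
by exists x; split=> //; exists n.
Qed.

Lemma closure_normP (A : set X) x :
  closure A x <-> forall e, 0 < e -> exists2 a, A a & `|x - a| < e.
Proof.
split=> [clAx e e0 | Ax B /nbhs_ballP [e /= e0 eB]].
  have [a [Aa]] := clAx _ (nbhsx_ballx x e e0).
  by rewrite -ball_normE; exists a.
have [a Aa xa] := Ax e e0; exists a; split=> //.
by apply: eB; rewrite -ball_normE.
Qed.

Section ClosedSpan.
Variable S : set X.

Lemma sub_lin_span : S `<=` lin_span S.
Proof.
move=> x Sx; exists 1%N, (fun=> 1), (fun=> x); split=> //.
by rewrite big_ord1 scale1r.
Qed.

Lemma lin_span0 : lin_span S 0.
Proof. by exists 0%N, (fun=> 0), (fun=> 0); split=> [[] //|]; rewrite big_ord0. Qed.

Lemma lin_spanZ c x : lin_span S x -> lin_span S (c *: x).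
Proof.
move=> [n [a [v [Sv ->]]]]; exists n, (fun i => c * a i), v; split=> //.
by rewrite scaler_sumr; apply: eq_bigr => i _; rewrite scalerA.
Qed.

Lemma lin_spanD x y : lin_span S x -> lin_span S y -> lin_span S (x + y).
Proof.
move=> [n [a [v [Sv ->]]]] [m [b [w [Sw ->]]]].
pose glue T (f : 'I_n -> T) (h : 'I_m -> T) i :=
  match fintype.split i with inl j => f j | inr j => h j end.
exists (n + m)%N, (glue _ a b), (glue _ v w); split.
  by move=> i; rewrite /glue; case: (fintype.split i).
rewrite big_split_ord /glue; congr (_ + _); apply: eq_bigr => i _.
  by rewrite (unsplitK (inl _ i)).
by rewrite (unsplitK (inr _ i)).
Qed.

Local Notation cspan := (closure (lin_span S)).

Lemma sub_closure_lin_span : S `<=` cspan.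
Proof. by move=> x /sub_lin_span; apply: subset_closure. Qed.

Lemma closure_lin_spanD x y : cspan x -> cspan y -> cspan (x + y).
Proof.
move=> /closure_normP clx /closure_normP cly; apply/closure_normP => e e0.
have e2 : 0 < e / 2 by lra.
have [a Sa xa] := clx _ e2; have [b Sb yb] := cly _ e2.
exists (a + b); first exact: lin_spanD.
rewrite opprD addrACA; apply: le_lt_trans (ler_normD _ _) _; lra.
Qed.

Lemma closure_lin_spanZ c x : cspan x -> cspan (c *: x).
Proof.
move=> /closure_normP clx; apply/closure_normP => e e0.
have c1_gt0 : 0 < `|c| + 1 by rewrite ltr_wpDl.
have [a Sa] := clx _ (divr_gt0 e0 c1_gt0); rewrite ltr_pdivlMr // => xa.
exists (c *: a); first exact: lin_spanZ.
rewrite -scalerBr normrZ; have := normr_ge0 c; have := normr_ge0 (x - a); nra.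
Qed.

Lemma closure_lin_spanB x y : cspan x -> cspan y -> cspan (x - y).
Proof.
by move=> clx cly; rewrite -scaleN1r; apply/closure_lin_spanD/closure_lin_spanZ.
Qed.

Lemma closure_lin_span_sum (r : seq nat) (P : pred nat) (F : nat -> X) :
  (forall i, P i -> cspan (F i)) -> cspan (\sum_(i <- r | P i) F i).
Proof.
move=> clF; apply: big_ind => //; last exact: closure_lin_spanD.
exact/subset_closure/lin_span0.
Qed.

End ClosedSpan.

Lemma linearly_dense_of_dense (S D : set X) :
  dense D -> D `<=` closure (lin_span S) -> linearly_dense S.
Proof.
move=> dD DS; apply/seteqP; split=> // x _.
rewrite (closure_id (closure (lin_span S))).1; last exact: closed_closure.
by apply: (closureS DS); rewrite dense_closureT.
Qed.

Lemma norm_shrink_le1 (x : X) : `|(1 + `|x|)^-1 *: x| <= 1.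
Proof.
have x1_gt0 : 0 < 1 + `|x| by rewrite ltr_pwDl.
rewrite normrZ ger0_norm ?invr_ge0 ?(ltW x1_gt0) // mulrC ler_pdivrMr //; lra.
Qed.

Lemma cauchy_seqP (u : nat -> X) :
  cauchy (u @ \oo) <-> forall e, 0 < e -> exists N,
    forall m n, (N <= m)%N -> (N <= n)%N -> `|u m - u n| < e.
Proof.
split=> [/cauchyP cu e e0 | cu].
  have e2 : 0 < e / 2 by lra.
  have [x [N _ uN]] := cu _ e2.
  exists N => m n Nm Nn; have := uN m Nm; have := uN n Nn.
  rewrite -!ball_normE /= => xn xm.
  by apply: le_lt_trans (ler_distD x _ _) _; rewrite distrC; lra.
apply: cauchy_exP => e e0; have [N uN] := cu e e0.
by exists (u N), N => // n Nn; rewrite -ball_normE; apply: uN.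
Qed.

Lemma cauchy_fast_subseq (u : nat -> X) (r : nat -> K) :
  cauchy (u @ \oo) -> (forall n, 0 < r n) ->
  exists psi : nat -> nat, (forall n, n <= psi n)%N /\
    forall p q, (p <= q)%N -> `|u (psi p) - u (psi q)| < r p.
Proof.
move=> /cauchy_seqP cu r_gt0.
have /choice [N uN] := fun n => cu (r n) (r_gt0 n).
exists (fun n => n + \max_(i < n.+1) N i)%N; split=> [n | p q pq].
  exact: leq_addr.
have N_le k n : (k <= n)%N -> (N k <= n + \max_(i < n.+1) N i)%N.
  move=> kn; apply: leq_trans (leq_addl _ _).
  exact: (leq_bigmax (F := fun i : 'I_n.+1 => N i) (Ordinal (kn : k < n.+1)%N)).
by apply: uN; apply: N_le.
Qed.

Lemma incomplete_fast_cauchy (r : nat -> K) :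
  incomplete_space X -> (forall n, 0 < r n) ->
  exists a : nat -> X, [/\ cauchy (a @ \oo), ~ cvg (a @ \oo) &
    forall p q, (p <= q)%N -> `|a p - a q| <= r p].
Proof.
move=> [u [cu ncu]] r_gt0; have [psi [psi_ge fast]] := cauchy_fast_subseq cu r_gt0.
have near_psi e : 0 < e -> exists N, forall m n, (N <= m)%N -> (N <= n)%N ->
    `|u m - u (psi n)| < e.
  move=> e0; have [N uN] := (cauchy_seqP u).1 cu e e0.
  by exists N => m n Nm Nn; apply: uN => //; apply: leq_trans Nn (psi_ge n).
exists (u \o psi); split=> [| cva | p q pq]; last exact/ltW/fast.
  apply/cauchy_seqP => e e0; have [N uN] := near_psi e e0.
  by exists N => m n Nm Nn; apply: uN => //; apply: leq_trans Nm (psi_ge m).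
apply: ncu; have /cvg_ex [l al] := cva; apply: (cvgP (0 + l)).
have -> : u = (fun n => u n - u (psi n)) + (u \o psi).
  by apply/funext => n; rewrite !fctE subrK.
apply: cvgD al; apply/cvgr0Pnorm_lt => e e0; have [N uN] := near_psi e e0.
by exists N => // n Nn; apply: uN.
Qed.

Lemma not_relatively_compact_asymptotic (a g : nat -> X) :
  cauchy (a @ \oo) -> ~ cvg (a @ \oo) -> (g - a) @ \oo --> 0 ->
  ~ relatively_compact (range g).
Proof.
move=> ca nca ga0 cpt; apply: nca.
have cg : cauchy (g @ \oo).
  apply/cauchy_seqP => e e0; have e3 : 0 < e / 3 by lra.
  have [N1 aN1] := (cauchy_seqP a).1 ca _ e3.
  have [N2 _ gaN2] := (cvgr0Pnorm_lt _).1 ga0 _ e3.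
  exists (maxn N1 N2) => m n; rewrite !geq_max => /andP[m1 m2] /andP[n1 n2].
  have := aN1 m n m1 n1; have := gaN2 m m2; have := gaN2 n n2; rewrite /= distrC.
  have := ler_distD (a m) (g m) (g n); have := ler_distD (a n) (a m) (g n); lra.
have /cvg_ex [x gx] : cvg (g @ \oo).
  apply: compact_cauchy_cvg cpt => //.
  by exists 0%N => // n _; apply: subset_closure; exists n.
apply: (cvgP (x - 0)); have -> : a = g - (g - a) by apply/funext => n /=; rewrite subKr.
exact: cvgB.
Qed.

Lemma norm_geometric_sum_le (s : K) (v : nat -> X) m n :
  0 <= s -> s <= 2^-1 -> (forall k, `|v k| <= 1) ->
  `|\sum_(m <= k < n) s ^+ k.+1 *: v k| <= 2 * s ^+ m.+1.
Proof.
move=> s_ge0 s_le_half v_le1.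
have tail d : forall m, `|\sum_(m <= k < m + d) s ^+ k.+1 *: v k| <= 2 * s ^+ m.+1.
  elim: d => [|d IH] i.
    by rewrite addn0 big_geq // normr0 mulr_ge0 // exprn_ge0.
  rewrite addnS -addSn big_ltn ?ltnS ?leq_addr //.
  apply: le_trans (ler_normD _ _) _.
  have := IH i.+1; rewrite normrZ ger0_norm ?exprn_ge0 // !exprS.
  have y_ge0 : 0 <= s * s ^+ i by rewrite mulr_ge0 ?exprn_ge0.
  set y := s * s ^+ i.
  have yv_le : y * `|v i| <= y by rewrite ler_piMr.
  have sy_le : 2 * (s * y) <= y.
    by rewrite mulrA -[leRHS]mul1r ler_wpM2r //; lra.
  lra.
have [mn | nm] := leqP m n; first by rewrite -(subnKC mn); apply: tail.
by rewrite big_geq ?normr0 ?mulr_ge0 ?exprn_ge0 // ltnW.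
Qed.

Section Perturbation.
Variables (s : nat -> K) (a e : nat -> X).
Hypotheses (s_gt0 : forall n, 0 < s n) (s_le_half : forall n, s n <= 2^-1).
Hypothesis s_cvg0 : s @ \oo --> 0.
Hypothesis e_le1 : forall k, `|e k| <= 1.
Hypothesis a_fast : forall p q, (p <= q)%N -> `|a p - a q| <= s p ^+ p.

Definition perturbed n := a n + \sum_(0 <= k < n) s n ^+ k.+1 *: e k.

Let s_small eps : 0 < eps -> exists N, forall n, (N <= n)%N -> s n < eps.
Proof.
move=> eps0; have [N _ sN] := (cvgr0Pnorm_lt _).1 s_cvg0 _ eps0.
by exists N => n /sN; rewrite gtr0_norm.
Qed.

Lemma norm_perturbed_sub_le n : `|perturbed n - a n| <= 2 * s n.
Proof.
have := @norm_geometric_sum_le (s n) e 0 n (ltW (s_gt0 n)) (s_le_half n) e_le1.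
by rewrite expr1 /perturbed [a n + _]addrC addrK.
Qed.

Lemma perturbed_bounded : bounded_seq perturbed.
Proof.
exists (`|a 0%N| + 2) => n.
have := ler_normD (a 0%N) (perturbed n - a 0%N); rewrite (addrC (a 0%N)) subrK.
have := ler_distD (a n) (perturbed n) (a 0%N); rewrite (distrC (a n)).
have := a_fast (leq0n n); rewrite expr0.
have := norm_perturbed_sub_le n; have := s_le_half n; lra.
Qed.

Lemma perturbed_sub_cvg0 : (perturbed - a) @ \oo --> 0.
Proof.
apply/cvgr0Pnorm_lt => eps eps0; have eps2 : 0 < eps / 2 by lra.
have [N sN] := s_small eps2.
exists N => // n /sN sn; rewrite /= !fctE.
by apply: le_lt_trans (norm_perturbed_sub_le n) _; lra.
Qed.

Lemma perturbed_residual_le L p q : (L.+1 < p)%N -> (p <= q)%N ->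
  `|s p ^+ L.+1 *: e L -
      (perturbed p - perturbed q - \sum_(0 <= k < L) s p ^+ k.+1 *: e k)|
    <= 3 * s p ^+ L.+2 + 2 * s q.
Proof.
move=> Lp pq; have sp_ge0 := ltW (s_gt0 p).
rewrite [perturbed p]/perturbed (big_cat_nat (leq0n L) (ltnW (ltnW Lp))) /=.
rewrite (big_ltn (ltnW Lp)).
set S := \sum_(0 <= k < L) _; set t := _ *: e L; set W := \sum_(L.+1 <= k < p) _.
have -> : t - (a p + (S + (t + W)) - perturbed q - S) = perturbed q - a p - W.
  rewrite addrAC addrCA (addrC S) addrK opprB addrCA (addrCA (a p)).
  by rewrite opprD addNKr opprD addrA.
have W_le : `|W| <= 2 * s p ^+ L.+2 by apply: norm_geometric_sum_le.
have a_le : `|a q - a p| <= s p ^+ L.+2.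
  rewrite distrC; apply: le_trans (a_fast pq) _.
  by apply: ler_wiXn2l => //; have := s_le_half p; lra.
apply: le_trans (ler_normB _ _) _.
have := ler_distD (a q) (perturbed q) (a p); have := norm_perturbed_sub_le q.
lra.
Qed.

Lemma perturbed_approx L p q : (L.+1 < p)%N -> (p <= q)%N ->
  `|e L - (s p ^+ L.+1)^-1 *:
      (perturbed p - perturbed q - \sum_(0 <= k < L) s p ^+ k.+1 *: e k)|
    <= 3 * s p + 2 * s q / s p ^+ L.+1.
Proof.
move=> Lp pq; set Z := _ - _ - _; set t := s p ^+ L.+1.
have t_gt0 : 0 < t by apply: exprn_gt0.
have -> : e L - t^-1 *: Z = t^-1 *: (t *: e L - Z).
  by rewrite [RHS]scalerBr scalerA mulVf ?gt_eqF // scale1r.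
rewrite normrZ ger0_norm ?invr_ge0 ?(ltW t_gt0) // mulrC ler_pdivrMr //.
rewrite mulrDl divfK ?gt_eqF // -mulrA -exprS.
exact: perturbed_residual_le.
Qed.

Lemma closure_lin_span_perturbed (phi : nat -> nat) :
  (forall n, (phi n < phi n.+1)%N) ->
  forall L, closure (lin_span (range (perturbed \o phi))) (e L).
Proof.
move=> phi_incr L; elim/ltn_ind: L => L IH.
set Y := closure _.
have phi_ge m : (m <= phi m)%N.
  by elim: m => // m IHm; apply: leq_ltn_trans IHm (phi_incr m).
have phi_mono : {homo phi : m n / (m <= n)%N}.
  exact: homo_leq leqnn leq_trans (fun n => ltnW (phi_incr n)).
have Yg m : Y (perturbed (phi m)) by apply: sub_closure_lin_span; exists m.
rewrite (closure_id Y).1; last exact: closed_closure.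
apply/closure_normP => eps eps0.
have eps6 : 0 < eps / 6 by lra.
have [N1 sN1] := s_small eps6.
pose m := maxn N1 L.+2; pose p := phi m.
have Lp : (L.+1 < p)%N by apply: leq_trans (phi_ge m); rewrite leq_maxr.
have sp : s p < eps / 6 by apply/sN1/(leq_trans _ (phi_ge m)); rewrite leq_maxl.
pose t := s p ^+ L.+1; have t_gt0 : 0 < t by apply: exprn_gt0.
have epst4 : 0 < eps * t / 4 by rewrite divr_gt0 ?mulr_gt0.
have [N2 sN2] := s_small epst4.
pose q := phi (maxn N2 m).
have pq : (p <= q)%N by apply: phi_mono; rewrite leq_maxr.
have sq : s q < eps * t / 4 by apply/sN2/(leq_trans _ (phi_ge _)); rewrite leq_maxl.
exists (t^-1 *: (perturbed p - perturbed q - \sum_(0 <= k < L) s p ^+ k.+1 *: e k)).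
  apply: closure_lin_spanZ; apply: closure_lin_spanB.
    exact: closure_lin_spanB (Yg _) (Yg _).
  rewrite big_nat_cond; apply: closure_lin_span_sum => k /andP[/andP[_ kL] _].
  exact/closure_lin_spanZ/IH.
apply: le_lt_trans (perturbed_approx Lp pq) _.
have : 2 * s q / t < eps / 2 by rewrite ltr_pdivrMr //; lra.
lra.
Qed.

End Perturbation.

End RealNormedSpace.

Theorem theorem5p2 (X : normedModType R) :
  separable_space X -> incomplete_space X ->
  exists g : nat -> X,
    bounded_seq g /\ overcomplete g /\ ~ relatively_compact (range g).
Proof.
move=> /separable_dense_seq [d d_dense] incX.
pose s n : R := harmonic (n + 1)%N.
have s_gt0 n : 0 < s n by exact: harmonic_gt0.
have s_le_half n : s n <= 2^-1 by rewrite /s /= lef_pV2 ?posrE // ler_nat addn1.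
have s_cvg0 : s @ \oo --> (0%R : R) by rewrite /s cvg_shiftn; exact: cvg_harmonic.
have [a [ca nca a_fast]] := incomplete_fast_cauchy incX (fun n => exprn_gt0 n (s_gt0 n)).
pose e k := (1 + `|d k|)^-1 *: d k.
have d_scale k : d k = (1 + `|d k|) *: e k.
  by rewrite scalerA mulfV ?scale1r // gt_eqF // ltr_pwDl.
have e_le1 k : `|e k| <= 1 by exact: norm_shrink_le1.
exists (perturbed s a e); split; last split.
- exact: perturbed_bounded s_gt0 s_le_half e_le1 a_fast.
- move=> phi phi_incr; apply: (linearly_dense_of_dense d_dense) => _ [k _ <-].
  rewrite d_scale; apply: closure_lin_spanZ.
  exact (closure_lin_span_perturbed s_gt0 s_le_half s_cvg0 e_le1 a_fast phi_incr (L := k)).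
- apply: (not_relatively_compact_asymptotic ca nca).
  exact: (perturbed_sub_cvg0 a s_gt0 s_le_half s_cvg0 e_le1).
Qed.
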